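(* Every graph of pathwidth at most $1$ and order $n$ has at most $2^{n/2}$ minimal dominating sets. The bound is attained by the path on $2$ vertices.
   Context: A dominating set of $G=(V,E)$ is a set $D\subseteq V$ such that every vertex outside $D$ has a neighbour in $D$; it is minimal if no proper subset is dominating. Order = number of vertices; pathwidth is the standard notion. *)

From HB Require Import structures.
From mathcomp Require Import all_boot.
Set Implicit Arguments. Unset Strict Implicit. Unset Printing Implicit Defensive.

Definition simple_graph (T : finType) (e : rel T) : Prop :=
  symmetric e /\ irreflexive e.

Definition dominating (T : finType) (e : rel T) (D : {set T}) : bool :=
  [forall v, (v \notin D) ==> [exists u, (u \in D) && e v u]].

Definition minimal_dominating (T : finType) (e : rel T) (D : {set T}) : bool :=
  dominating e D && [forall D' : {set T}, (D' \proper D) ==> ~~ dominating e D'].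

Definition mds (T : finType) (e : rel T) : {set {set T}} :=
  [set D : {set T} | minimal_dominating e D].

Definition path_decomposition (T : finType) (e : rel T) (s : seq {set T}) : Prop :=
  (forall v : T, exists2 B, B \in s & v \in B) /\
  (forall u v : T, e u v -> exists2 B, B \in s & (u \in B) && (v \in B)) /\
  (forall (v : T) (i j k : nat), i <= j -> j <= k -> k < size s ->
      v \in nth set0 s i -> v \in nth set0 s k -> v \in nth set0 s j).

Definition decomposition_width_le (T : finType) (s : seq {set T}) (w : nat) : Prop :=
  forall B, B \in s -> #|B| <= w.+1.

Definition pathwidth_le (T : finType) (e : rel T) (w : nat) : Prop :=
  exists s : seq {set T}, path_decomposition e s /\ decomposition_width_le s w.

Definition P2 : rel 'I_2 := fun i j => i != j.

(* A dominating set is minimal iff each of its vertices has a private neighbour.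
   We generalise to [min_doms V N], the subsets of V dominating N with private
   neighbours in N, and prove |min_doms V (V \ F)|^2 <= 2^|V| by induction on
   |V|, where F holds at most one "free" vertex occurring early in the
   decomposition.  Either V has an isolated vertex, or we take the non-isolated
   vertex x whose last bag comes first: x is a leaf hanging at some y, and y has
   at most one neighbour that is not a leaf.  According to whether x is free and
   to the neighbours of y, the minimal dominators are split by their trace on
   x, y and the non-leaf neighbour r of y; deleting a common set from every
   member of a part maps it injectively into an instance with 2, 3 or 4 fewer
   vertices, whose new free vertex is again early.  Then (a+b)^2 <= 4*2^(n-2)
   and (a+b+c)^2 <= 3*(2^(n-3) + 2^(n-4) + 2^(n-3)) <= 2^n close the induction. *)

From HB Require Import structures.
From mathcomp Require Import all_boot zify.
Set Implicit Arguments. Unset Strict Implicit. Unset Printing Implicit Defensive.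

Section Graph.
Variables (T : finType) (e : rel T).
Hypothesis e_irr : irreflexive e.

Definition cnb (v u : T) : bool := (v == u) || e v u.

(* For V = N = T these are the minimal dominating sets. *)
Definition min_doms (V N : {set T}) : {set {set T}} :=
  [set D : {set T} | [&& D \subset V,
     [forall v in N, [exists u in D, cnb v u]] &
     [forall z in D, [exists w in N, [forall u in D, cnb w u == (u == z)]]]]].

Lemma cnb_refl v : cnb v v.
Proof. by rewrite /cnb eqxx. Qed.

Lemma cnb_edge v u : e v u -> cnb v u.
Proof. by rewrite /cnb => ->; rewrite orbT. Qed.

Lemma cnbP v u : cnb v u -> v = u \/ e v u.
Proof. by case/orP => [/eqP|]; [left|right]. Qed.

Lemma min_domsP (V N D : {set T}) : reflect
  [/\ D \subset V, (forall v, v \in N -> exists2 u, u \in D & cnb v u) &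
      (forall z, z \in D -> exists2 w, w \in N & forall u, u \in D -> cnb w u = (u == z))]
  (D \in min_doms V N).
Proof.
rewrite inE; apply: (iffP and3P) => [[DV /forallP dom /forallP priv]|[DV dom priv]].
  split => // [v vN|z zD].
    by have /existsP[u /andP[uD vu]] := implyP (dom v) vN; exists u.
  have /existsP[w /andP[wN /forallP Hw]] := implyP (priv z) zD.
  by exists w => // u uD; apply/eqP/(implyP (Hw u) uD).
split => //; apply/forallP.
  move=> v; apply/implyP => /dom[u uD vu].
  by apply/existsP; exists u; rewrite uD.
move=> z; apply/implyP => /priv[w wN Hw]; apply/existsP; exists w; rewrite wN.
by apply/forallP => u; apply/implyP => uD; rewrite Hw.
Qed.

Lemma min_doms_sub (V N D : {set T}) u : D \in min_doms V N -> u \in D -> u \in V.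
Proof. by case/min_domsP => DV _ _; apply: (subsetP DV). Qed.

Lemma min_doms_dom (V N D : {set T}) v : D \in min_doms V N -> v \in N ->
  exists2 u, u \in D & cnb v u.
Proof. by case/min_domsP => _ dom _; apply: dom. Qed.

Lemma min_doms_priv (V N D : {set T}) z : D \in min_doms V N -> z \in D ->
  exists2 w, w \in N & forall u, u \in D -> cnb w u = (u == z).
Proof. by case/min_domsP => _ _ priv; apply: priv. Qed.

(* The reduction step of every case analysis: removing from D a set X of its
   vertices leaves a minimal dominator of a smaller instance (V', N'), provided
   N' is the part of N that X does not dominate. *)
Lemma min_doms_remove (V N V' N' X D : {set T}) :
  D \in min_doms V N -> X \subset D -> D :\: X \subset V' -> N' \subset N ->
  (forall v u, v \in N' -> u \in X -> ~~ cnb v u) ->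
  (forall w, w \in N -> w \notin N' -> exists2 u, u \in X & cnb w u) ->
  D :\: X \in min_doms V' N'.
Proof.
move=> /min_domsP[_ dom priv] XD DV' N'N farX nearX; apply/min_domsP; split => //.
  move=> v vN'; have [u uD vu] := dom v (subsetP N'N v vN').
  by exists u; rewrite // inE uD andbT; apply: contraTN vu; apply: farX.
move=> z /setDP[zD zX]; have [w wN Hw] := priv z zD; exists w.
  apply: contraNT zX => wN'; have [u uX wu] := nearX w wN wN'.
  by move: (Hw u (subsetP XD u uX)); rewrite wu => /esym/eqP <-.
by move=> u /setDP[uD _]; apply: Hw.
Qed.

Lemma card_le_remove (S S' : {set {set T}}) (X : {set T}) :
  (forall D, D \in S -> X \subset D /\ D :\: X \in S') -> #|S| <= #|S'|.
Proof.
move=> H; rewrite -(@card_in_imset _ _ (fun D => D :\: X) S).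
  apply: subset_leq_card; apply/subsetP => _ /imsetP[D DS ->]; exact: (H D DS).2.
move=> D1 D2 /H[X1 _] /H[X2 _] E.
by rewrite -(setID D1 X) -(setID D2 X) (setIidPr X1) (setIidPr X2) E.
Qed.

Lemma minimal_dominating_private (D : {set T}) z :
  minimal_dominating e D -> z \in D ->
  exists w, forall u, u \in D -> cnb w u = (u == z).
Proof.
case/andP => dom /forallP minD zD.
have := implyP (minD (D :\ z)) (properD1 zD).
rewrite /dominating negb_forall => /existsP[w]; rewrite negb_imply negb_exists.
move=> /andP[wDz /forallP Hw]; exists w => u uD.
case: (eqVneq u z) => [->|uz]; last first.
  have uDz : u \in D :\ z by rewrite in_setD1 uz uD.
  move: (Hw u); rewrite uDz /= => /negbTE ewu; rewrite /cnb ewu orbF.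
  by apply: contraNF wDz => /eqP ->.
case: (eqVneq w z) => [->|wz]; first exact: cnb_refl.
have wD : w \notin D by move: wDz; rewrite in_setD1 wz.
have /existsP[u' /andP[u'D ewu']] := implyP (forallP dom w) wD.
by move: (Hw u'); rewrite in_setD1 u'D ewu' !andbT negbK => /eqP <-; apply: cnb_edge.
Qed.

Lemma mds_min_doms : mds e = min_doms setT setT.
Proof.
apply/setP => D; rewrite inE; apply/idP/min_domsP.
  move=> minD; split => [|v _|z zD]; first exact: subsetT.
    case: (boolP (v \in D)) => vD; first by exists v; rewrite ?cnb_refl.
    have /existsP[u /andP[uD evu]] := implyP (forallP (andP minD).1 v) vD.
    by exists u; rewrite ?cnb_edge.
  by have [w Hw] := minimal_dominating_private minD zD; exists w.
move=> [_ dom priv]; apply/andP; split.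
  apply/forallP => v; apply/implyP => vD.
  have [u uD /cnbP[E|evu]] := dom v (in_setT v); first by rewrite E uD in vD.
  by apply/existsP; exists u; rewrite uD.
apply/forallP => D'; apply/implyP => /properP[D'D [z zD zD']].
have [w _ Hw] := priv z zD; apply/negP => dom'.
have [u uD' wu] : exists2 u, u \in D' & cnb w u.
  case: (boolP (w \in D')) => wD'; first by exists w; rewrite ?cnb_refl.
  have /existsP[u /andP[uD' ewu]] := implyP (forallP dom' w) wD'.
  by exists u; rewrite ?cnb_edge.
by move: (Hw u (subsetP D'D u uD')); rewrite wu => /esym/eqP Euz; rewrite -Euz uD' in zD'.
Qed.

Lemma edge_neq u v : e u v -> u != v.
Proof. by apply: contraTneq => ->; rewrite e_irr. Qed.

Definition has_nb (V : {set T}) v : bool := [exists u in V, e v u].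

Lemma has_nb_sub (W V : {set T}) v : W \subset V -> has_nb W v -> has_nb V v.
Proof.
move=> WV /existsP[u /andP[uW evu]]; apply/existsP; exists u.
by rewrite (subsetP WV u uW).
Qed.

Lemma has_nb_edge (V : {set T}) a b : b \in V -> e a b -> has_nb V a.
Proof. by move=> bV eab; apply/existsP; exists b; rewrite bV. Qed.

Definition nonleaf (V : {set T}) y z : Prop := exists2 w, w \in V & (w != y) && e z w.

Definition leaves (V : {set T}) y : {set T} :=
  [set z in V | e y z && [forall w in V, e z w ==> (w == y)]].

Lemma leavesP (V : {set T}) y z :
  reflect [/\ z \in V, e y z & forall w, w \in V -> e z w -> w = y] (z \in leaves V y).
Proof.
rewrite inE; apply: (iffP and3P) => [[zV eyz /forallP H]|[zV eyz H]]; split => //.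
  by move=> w wV ezw; apply/eqP; move: (H w); rewrite wV ezw.
by apply/forallP => w; apply/implyP => wV; apply/implyP => /(H w wV) ->.
Qed.

Lemma nonleafP (V : {set T}) y z : z \in V -> e y z -> z \notin leaves V y -> nonleaf V y z.
Proof.
move=> zV eyz; rewrite inE zV eyz /= negb_forall => /existsP[w].
rewrite negb_imply => /andP[wV]; rewrite negb_imply => /andP[ezw wy].
by exists w; rewrite // wy.
Qed.

End Graph.

Lemma twice_mul_le a b : 2 * (a * b) <= a ^ 2 + b ^ 2.
Proof.
wlog ab : a b / a <= b => [hyp|]; first by case: (leqP a b) => [|/ltnW] /hyp; lia.
have [d ->] : exists d, b = a + d by exists (b - a); lia.
rewrite !expnS !expn0; nia.
Qed.

Lemma sq_add2_le a b : (a + b) ^ 2 <= 2 * (a ^ 2 + b ^ 2).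
Proof. have := twice_mul_le a b; rewrite !expnS !expn0; nia. Qed.

Lemma sq_add3_le a b c : (a + b + c) ^ 2 <= 3 * (a ^ 2 + b ^ 2 + c ^ 2).
Proof.
have := twice_mul_le a b; have := twice_mul_le a c; have := twice_mul_le b c.
rewrite !expnS !expn0; nia.
Qed.

Lemma exp2_shift m k n : m + k <= n -> 2 ^ m * 2 ^ k <= 2 ^ n.
Proof. by move=> H; rewrite -expnD leq_pexp2l. Qed.

Lemma two_parts_bound a b m n :
  a ^ 2 <= 2 ^ m -> b ^ 2 <= 2 ^ m -> m + 2 <= n -> (a + b) ^ 2 <= 2 ^ n.
Proof.
move=> Ha Hb /exp2_shift; rewrite expnS expn1 => Hn.
by have := sq_add2_le a b; lia.
Qed.

(* Three parts, charged to instances smaller by 3, 4 and 3: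
   3 * (2^(n-3) + 2^(n-4) + 2^(n-3)) = 15 * 2^(n-4) <= 2^n. *)
Lemma three_parts_bound a b c m1 m2 m3 n :
  a ^ 2 <= 2 ^ m1 -> b ^ 2 <= 2 ^ m2 -> c ^ 2 <= 2 ^ m3 ->
  m1 + 3 <= n -> m2 + 4 <= n -> m3 + 3 <= n -> (a + b + c) ^ 2 <= 2 ^ n.
Proof.
move=> Ha Hb Hc /exp2_shift H1 /exp2_shift H2 /exp2_shift H3.
move: H1 H2 H3; rewrite !expnS expn0 => H1 H2 H3.
by have := sq_add3_le a b c; lia.
Qed.

Section PathDecomposition.
Variables (T : finType) (e : rel T) (s : seq {set T}).
Hypotheses (e_sym : symmetric e) (e_irr : irreflexive e).
Local Notation B i := (nth set0 s i).
Hypothesis bag_edge : forall u v, e u v -> exists i, (u \in B i) && (v \in B i).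
Hypothesis bag_interval : forall v i j k, i <= j -> j <= k -> k < size s ->
  v \in B i -> v \in B k -> v \in B j.
Hypothesis bag_size : forall i, #|B i| <= 2.
Local Notation has_nb := (has_nb e).
Local Notation nonleaf := (nonleaf e).
Local Notation edge_neq := (edge_neq e_irr).

Definition early (V : {set T}) f : Prop := forall v i, v \in V -> has_nb V v ->
  v \in B i -> exists2 j, j <= i & f \in B j.

Definition last_bag v p : bool :=
  (v \in B p) && [forall k : 'I_(size s), (v \in B k) ==> (k <= p)].

Lemma early_sub (W V : {set T}) f : W \subset V -> early V f -> early W f.
Proof. by move=> WV Ef v i vW /(has_nb_sub WV); apply: Ef (subsetP WV v vW). Qed.

Lemma in_bag_size v i : v \in B i -> i < size s.
Proof. by case: (ltnP i (size s)) => // H; rewrite nth_default // inE. Qed.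

Lemma bag_two i a b c : a \in B i -> b \in B i -> c \in B i -> a != b -> c = a \/ c = b.
Proof.
move=> aB bB cB ab; case: (eqVneq c a) => [->|ca]; first by left.
case: (eqVneq c b) => [->|cb]; first by right.
have : #|c |: (a |: [set b])| <= #|B i|.
  apply: subset_leq_card; apply/subsetP => z; rewrite !inE.
  by case/or3P => /eqP->.
by rewrite !cardsU1 cards1 !inE negb_or ca cb ab /= => /leq_trans/(_ (bag_size i)).
Qed.

Lemma last_bagP v p : last_bag v p -> v \in B p /\ forall k, v \in B k -> k <= p.
Proof.
case/andP => vp /forallP H; split => // k vk.
exact: (implyP (H (Ordinal (in_bag_size vk))) vk).
Qed.

Lemma last_bag_exists v i : v \in B i -> exists p, last_bag v p.
Proof.
move=> vi; have exP : exists n, v \in B n by exists i.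
have ubP n : v \in B n -> n <= size s by move/in_bag_size/ltnW.
case: (ex_maxnP exP ubP) => p vp Hp; exists p; rewrite /last_bag vp /=.
by apply/forallP => k; apply/implyP => /Hp.
Qed.

(* The pendant choice: among the non-isolated vertices of V take one, x, whose
   last bag p is as early as possible.  Every non-isolated vertex met before p
   is still present in bag p. *)
Lemma pendant_choice (V : {set T}) v0 : v0 \in V -> has_nb V v0 -> exists x p,
  [/\ x \in V, has_nb V x, last_bag x p &
      forall v i, v \in V -> has_nb V v -> i <= p -> v \in B i -> v \in B p].
Proof.
move=> v0V nv0.
pose ends p := [exists v in V, has_nb V v && last_bag v p].
have ends_last v i : v \in V -> has_nb V v -> v \in B i -> exists2 q, ends q & last_bag v q.
  move=> vV nv /last_bag_exists[q lq]; exists q => //.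
  by apply/existsP; exists v; rewrite vV nv.
have [p /existsP[x /and3P[xV nx lx]] pmin] : exists2 p, ends p & forall q, ends q -> p <= q.
  case/existsP: (nv0) => u /andP[_ /bag_edge[i /andP[v0i _]]].
  have [q Eq _] := ends_last v0 i v0V nv0 v0i.
  by case: (ex_minnP (ex_intro _ q Eq)) => p; exists p.
exists x, p; split => // v i vV nv ip vi.
have [q /pmin pq /last_bagP[vq _]] := ends_last v i vV nv vi.
exact: (bag_interval ip pq (in_bag_size vq) vi vq).
Qed.

Section Pendant.
Variables (V : {set T}) (x y : T) (p q : nat).
Hypotheses (xV : x \in V) (yV : y \in V) (exy : e x y).
Hypotheses (x_in_p : x \in B p) (x_last : forall k, x \in B k -> k <= p).
Hypothesis p_first : forall v i, v \in V -> has_nb V v -> i <= p -> v \in B i -> v \in B p.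
Hypotheses (y_in_q : y \in B q) (y_last : forall k, y \in B k -> k <= q).

Lemma y_in_p : y \in B p.
Proof.
have [i /andP[xi yi]] := bag_edge exy.
have ny : has_nb V y by apply: has_nb_edge xV _; rewrite e_sym.
exact: p_first yV ny (x_last xi) yi.
Qed.

Lemma bag_p_xy v : v \in B p -> v = x \/ v = y.
Proof. by move/(bag_two x_in_p y_in_p); apply; apply: edge_neq. Qed.

Lemma pendant_leaf z : z \in V -> e x z -> z = y.
Proof.
move=> zV exz; have [i /andP[xi zi]] := bag_edge exz.
have nz : has_nb V z by apply: has_nb_edge xV _; rewrite e_sym.
have zp := p_first zV nz (x_last xi) zi.
by case: (bag_p_xy zp) => // Ezx; rewrite Ezx e_irr in exz.
Qed.

Lemma y_between j : p <= j -> j <= q -> y \in B j.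
Proof. by move=> pj jq; apply: bag_interval pj jq (in_bag_size y_in_q) y_in_p y_in_q. Qed.

Lemma nonleaf_in_q z : z \in V -> e y z -> nonleaf V y z -> z \in B q.
Proof.
move=> zV eyz [w wV /andP[wy ezw]].
have [j /andP[yj zj]] := bag_edge eyz.
have [qz /last_bagP[zqz z_last]] := last_bag_exists zj.
case: (leqP q qz) => qqz; first exact: bag_interval (y_last yj) qqz (in_bag_size zqz) zj zqz.
have [k /andP[zk wk]] := bag_edge ezw.
case: (leqP k p) => kp.
  have zV' : has_nb V z by apply: has_nb_edge yV _; rewrite e_sym.
  case: (bag_p_xy (p_first zV zV' kp zk)) => Ez; last by rewrite Ez e_irr in eyz.
  by rewrite Ez in ezw; rewrite (pendant_leaf wV ezw) eqxx in wy.
have yk : y \in B k by apply: y_between; rewrite ltnW // (leq_ltn_trans (z_last k zk)).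
case: (bag_two yk zk wk (edge_neq eyz)) => Ew; first by rewrite Ew eqxx in wy.
by rewrite Ew e_irr in ezw.
Qed.

Lemma nonleaf_uniq z1 z2 : z1 \in V -> z2 \in V -> e y z1 -> e y z2 ->
  nonleaf V y z1 -> nonleaf V y z2 -> z1 = z2.
Proof.
move=> z1V z2V e1 e2 n1 n2.
have := bag_two y_in_q (nonleaf_in_q z1V e1 n1) (nonleaf_in_q z2V e2 n2) (edge_neq e1).
by case=> // Ez2; rewrite Ez2 e_irr in e2.
Qed.

Lemma early_xy f : f \in V -> has_nb V f -> early V f -> f = x \/ f = y.
Proof.
move=> fV nf Ef; have [j jp fj] := Ef x p xV (has_nb_edge yV exy) x_in_p.
exact: bag_p_xy (p_first fV nf jp fj).
Qed.

Lemma early_nonleaf (W : {set T}) r : W \subset V -> x \notin W -> y \notin W ->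
  r \in W -> e y r -> nonleaf V y r -> early W r.
Proof.
move=> WV xW yW rW eyr nlr v i vW nvW vi.
have vV := subsetP WV v vW; have nv := has_nb_sub WV nvW.
have rq := nonleaf_in_q (subsetP WV r rW) eyr nlr.
case: (leqP q i) => qi; first by exists q.
case: (boolP (v \in B q)) => vq.
  case: (bag_two y_in_q rq vq (edge_neq eyr)) => Ev; first by rewrite -Ev vW in yW.
  by exists i; rewrite // -Ev.
case/existsP: nvW => u /andP[uW evu]; have [k /andP[vk uk]] := bag_edge evu.
have kq : k < q.
  rewrite ltnNge; apply: contra vq => qk.
  exact: bag_interval (ltnW qi) qk (in_bag_size vk) vi vk.
have pk : p < k.
  rewrite ltnNge; apply/negP => kp.
  by case: (bag_p_xy (p_first vV nv kp vk)) => Ev; [move: xW | move: yW]; rewrite -Ev vW.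
have yv : y != v by apply: contraNneq yW => ->.
case: (bag_two (y_between (ltnW pk) (ltnW kq)) vk uk yv) => Eu; first by rewrite -Eu uW in yW.
by rewrite Eu e_irr in evu.
Qed.

Lemma early_y : early (V :\ x) y.
Proof.
move=> v i /setD1P[vx vV] nvW vi; have nv := has_nb_sub (subD1set V x) nvW.
case: (leqP p i) => pi; first by exists p; last exact: y_in_p.
case: (bag_p_xy (p_first vV nv (ltnW pi) vi)) => Ev; first by rewrite Ev eqxx in vx.
by exists i; rewrite // -Ev.
Qed.

End Pendant.

Record pendant (V : {set T}) (x y : T) : Prop := Pendant {
  pendant_xV : x \in V;
  pendant_yV : y \in V;
  pendant_edge : e x y;
  pendant_is_leaf : forall z, z \in V -> e x z -> z = y;
  pendant_nonleaf_uniq : forall z1 z2, z1 \in V -> z2 \in V -> e y z1 -> e y z2 ->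
    nonleaf V y z1 -> nonleaf V y z2 -> z1 = z2;
  pendant_early_xy : forall f, f \in V -> has_nb V f -> early V f -> f = x \/ f = y;
  pendant_early_nonleaf : forall (W : {set T}) r, W \subset V -> x \notin W ->
    y \notin W -> r \in W -> e y r -> nonleaf V y r -> early W r;
  pendant_early_y : early (V :\ x) y }.

Lemma pendant_exists (V : {set T}) v0 : v0 \in V -> has_nb V v0 -> exists x y, pendant V x y.
Proof.
move=> v0V nv0; have [x [p [xV /existsP[y /andP[yV exy]] /last_bagP[xp x_last] p_first]]] :=
  pendant_choice v0V nv0.
have [q /last_bagP[yq y_last]] := last_bag_exists (y_in_p xV yV exy x_last p_first).
exists x, y; split => //.
- exact: pendant_leaf xV yV exy xp x_last p_first.
- exact: nonleaf_uniq xV yV exy xp x_last p_first yq y_last.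
- exact: early_xy xV yV exy xp x_last p_first.
- exact: early_nonleaf xV yV exy xp x_last p_first yq y_last.
- exact: early_y xV yV exy xp x_last p_first.
Qed.

End PathDecomposition.

Lemma card_split2 (U : finType) (A : {set U}) (P : pred U) :
  #|A| = #|[set D in A | P D]| + #|[set D in A | ~~ P D]|.
Proof.
by rewrite -(cardsID [set D | P D] A); congr (_ + _); apply: eq_card => D; rewrite !inE andbC.
Qed.

Lemma card_split3 (U : finType) (A : {set U}) (P Q : pred U) :
  #|A| = #|[set D in A | P D]| + #|[set D in A | ~~ P D && Q D]|
         + #|[set D in A | ~~ P D && ~~ Q D]|.
Proof.
rewrite (card_split2 A P) (card_split2 [set D in A | ~~ P D] Q) addnA.
by congr (_ + _ + _); apply: eq_card => D; rewrite !inE andbA.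
Qed.

Lemma setD2P (U : finType) (V : {set U}) a b u :
  reflect [/\ u \in V, u != a & u != b] (u \in V :\: [set a; b]).
Proof.
rewrite in_setD !inE negb_or.
by apply: (iffP idP) => [/andP[/andP[? ?] ?]|[-> -> ->]].
Qed.

Lemma card_minus_pair (U : finType) (V : {set U}) a b :
  a \in V -> b \in V -> a != b -> #|V :\: [set a; b]| + 2 <= #|V|.
Proof.
move=> aV bV ab; rewrite -(cardsID [set a; b] V) addnC leq_add2r.
have <- : #|[set a; b]| = 2 by rewrite cards2 ab.
by apply/subset_leq_card/subsetP => z; case/set2P => ->; rewrite in_setI ?aV ?bV !inE eqxx ?orbT.
Qed.

Section Counting.
Variables (T : finType) (e : rel T) (s : seq {set T}).
Hypotheses (e_sym : symmetric e) (e_irr : irreflexive e).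
Local Notation B i := (nth set0 s i).
Hypothesis bag_edge : forall u v, e u v -> exists i, (u \in B i) && (v \in B i).
Hypothesis bag_interval : forall v i j k, i <= j -> j <= k -> k < size s ->
  v \in B i -> v \in B k -> v \in B j.
Hypothesis bag_size : forall i, #|B i| <= 2.
Local Notation cnb := (cnb e).
Local Notation min_doms := (min_doms e).
Local Notation has_nb := (has_nb e).
Local Notation nonleaf := (nonleaf e).
Local Notation leaves := (leaves e).
Local Notation early := (early e s).
Local Notation pendant := (pendant e s).
Local Notation edge_neq := (edge_neq e_irr).

Definition admissible (V F : {set T}) : Prop :=
  [/\ F \subset V, #|F| <= 1 & forall f, f \in F -> early V f].

Definition few_doms (V F : {set T}) : Prop := #|min_doms V (V :\: F)| ^ 2 <= 2 ^ #|V|.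

Lemma admissible0 (V : {set T}) : admissible V set0.
Proof. by split; rewrite ?sub0set ?cards0 // => f; rewrite inE. Qed.

Lemma few_doms_empty (F : {set T}) : few_doms set0 F.
Proof.
rewrite /few_doms cards0 expn0.
suff : #|min_doms set0 (set0 :\: F)| <= 1 by case: #|_| => [|[]].
rewrite -(cards1 (set0 : {set T})); apply/subset_leq_card/subsetP => D /min_domsP[].
by rewrite subset0 => /eqP-> _ _; rewrite inE.
Qed.

(* Removing y together with its leaves; the remaining neighbours of y are
   already dominated when y is in the dominating set, hence become free. *)
Definition trim (V : {set T}) y : {set T} := V :\: (y |: leaves V y).
Definition trim_free (V : {set T}) y : {set T} := [set z in trim V y | e y z].

Lemma trimP (V : {set T}) y u : reflect [/\ u \in V, u != y & u \notin leaves V y] (u \in trim V y).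
Proof.
rewrite in_setD in_setU1 negb_or.
by apply: (iffP idP) => [/andP[/andP[uy uL] uV] | [-> -> ->]].
Qed.

Lemma trim_freeE (V : {set T}) y z : (z \in trim_free V y) = (z \in trim V y) && e y z.
Proof. by rewrite /trim_free in_set. Qed.

Lemma pendant_in_leaves (V : {set T}) x y : pendant V x y -> x \in leaves V y.
Proof. by case=> xV _ exy xleaf _ _ _ _; apply/leavesP; split; rewrite // e_sym. Qed.

Lemma card_trim (V : {set T}) x y : pendant V x y -> #|trim V y| + 2 <= #|V|.
Proof.
move=> pxy; have [xV yV exy _ _ _ _ _] := pxy; have xL := pendant_in_leaves pxy.
rewrite -(cardsID (y |: leaves V y) V) addnC leq_add2r.
have <- : #|[set x; y]| = 2 by rewrite cards2 (edge_neq exy).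
apply/subset_leq_card/subsetP => z.
by case/set2P => ->; rewrite in_setI in_setU1 ?xL ?xV ?yV ?eqxx ?orbT.
Qed.

Lemma trim_admissible (V : {set T}) x y : pendant V x y -> admissible (trim V y) (trim_free V y).
Proof.
move=> pxy; have [_ _ _ _ uniqnl _ early_nl _] := pxy; have xL := pendant_in_leaves pxy.
split.
- by apply/subsetP => z; rewrite trim_freeE => /andP[].
- apply/card_le1_eqP => a b; rewrite !trim_freeE => /andP[/trimP[aV _ aL] eya] /andP[/trimP[bV _ bL] eyb].
  by apply: uniqnl => //; apply: nonleafP.
- move=> r; rewrite trim_freeE => /andP[/trimP[rV ry rL] eyr].
  apply: early_nl => //; last exact: nonleafP.
  + by apply/subsetP => u /trimP[].
  + by apply/trimP => -[]; rewrite xL.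
  + by apply/trimP => -[_]; rewrite eqxx.
  + by apply/trimP; split.
Qed.

Section Step.
Variables (V F : {set T}).
Hypothesis IH : forall V' F' : {set T}, #|V'| < #|V| -> admissible V' F' -> few_doms V' F'.
Hypothesis adm : admissible V F.
Local Notation S := (min_doms V (V :\: F)).

Lemma part_bound (P : pred {set T}) (V' F' X : {set T}) :
  #|V'| < #|V| -> admissible V' F' ->
  (forall D, D \in S -> P D -> X \subset D /\ D :\: X \subset V') ->
  V' :\: F' \subset V :\: F ->
  (forall v u, v \in V' :\: F' -> u \in X -> ~~ cnb v u) ->
  (forall w, w \in V :\: F -> w \notin V' :\: F' -> exists2 u, u \in X & cnb w u) ->
  #|[set D in S | P D]| ^ 2 <= 2 ^ #|V'|.
Proof.
move=> ltV adm' HX N'N far near; apply: leq_trans (IH ltV adm'); rewrite leq_exp2r //.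
apply: (card_le_remove (X := X)) => D; rewrite inE => /andP[DS PD]; have [XD DV'] := HX D DS PD.
by split => //; apply: min_doms_remove DS XD DV' N'N far near.
Qed.

Lemma whole_bound (V' F' X : {set T}) :
  #|V'| < #|V| -> admissible V' F' ->
  (forall D, D \in S -> X \subset D /\ D :\: X \subset V') ->
  V' :\: F' \subset V :\: F ->
  (forall v u, v \in V' :\: F' -> u \in X -> ~~ cnb v u) ->
  (forall w, w \in V :\: F -> w \notin V' :\: F' -> exists2 u, u \in X & cnb w u) ->
  few_doms V F.
Proof.
move=> ltV adm' HX N'N far near.
have := part_bound (P := predT) ltV adm' (fun D DS _ => HX D DS) N'N far near.
have -> : [set D in S | predT D] = S by apply/setP => D; rewrite inE andbT.
by move/leq_trans; apply; rewrite leq_exp2l // ltnW.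
Qed.

(* An isolated vertex v of V is either free, and then lies in no minimal
   dominator, or it is not, and then lies in all of them. *)
Lemma isolated_case v : v \in V -> ~~ has_nb V v -> few_doms V F.
Proof.
move=> vV nv; have [FV /card_le1P F1 FI] := adm.
have only_v w : w \in V -> cnb w v -> w = v.
  by move=> wV /cnbP[//|ewv]; case/negP: nv; apply: has_nb_edge wV _; rewrite e_sym.
have ltV : #|V :\ v| < #|V| by rewrite (cardsD1 v V) vV.
case: (boolP (v \in F)) => vF.
  have Fv u : (u \in F) = (u == v) by rewrite (F1 v vF) inE.
  apply: (whole_bound (X := set0) ltV (admissible0 _)); rewrite ?setD0.
  - move=> D DS; rewrite sub0set setD0; split => //; apply/subsetP => u uD.
    rewrite in_setD1 (min_doms_sub DS uD) andbT; apply: contraTneq uD => ->.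
    apply/negP => vD; have [w /setDP[wV wF] Hw] := min_doms_priv DS vD.
    by move: (Hw v vD); rewrite eqxx => /(only_v w wV) wv; rewrite wv vF in wF.
  - by apply/subsetP => u /setD1P[uv uV]; rewrite in_setD uV Fv uv.
  - by move=> ? ? _; rewrite inE.
  - by move=> w /setDP[wV wF]; rewrite in_setD1 wV andbT negbK => /eqP wv; rewrite wv vF in wF.
have admV : admissible (V :\ v) F.
  split; first by apply/subsetP => u uF; rewrite in_setD1 (subsetP FV u uF) andbT;
    apply: contraNneq vF => <-.
  - exact/card_le1P.
  - by move=> f /FI; apply: early_sub (subD1set V v).
apply: (whole_bound (X := [set v]) ltV admV).
- move=> D DS; have vD : v \in D.
    have vN : v \in V :\: F by rewrite in_setD vF.
    have [u uD /cnbP[->//|evu]] := min_doms_dom DS vN.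
    by case/negP: nv; apply: has_nb_edge evu; apply: min_doms_sub DS uD.
  rewrite sub1set vD; split => //; apply/subsetP => u /setD1P[uv uD].
  by rewrite in_setD1 uv (min_doms_sub DS uD).
- by apply/subsetP => u /setDP[/setD1P[_ uV] uF]; rewrite in_setD uV uF.
- move=> w u /setDP[/setD1P[wv wV] _] /set1P->.
  by apply: contra wv => /(only_v w wV)->.
- move=> w /setDP[wV wF]; rewrite in_setD wF in_setD1 wV !andbT negbK => /eqP->.
  by exists v; rewrite ?inE ?cnb_refl.
Qed.

Section PendantCases.
Variables x y : T.
Hypothesis pxy : pendant V x y.

(* The case where x is not free, so that at most y is: split on whether y
   belongs to D.  If it does, trim y and its leaves and let the other
   neighbours of y become free; if it does not, all leaves of y belong to D
   and are trimmed together with y. *)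
Section Support.
Hypothesis Fy : forall f, f \in F -> f = y.

Lemma support_inN w : w \in V -> w != y -> w \in V :\: F.
Proof. by move=> wV wy; rewrite in_setD wV andbT; apply: contra wy => /Fy ->. Qed.

Lemma support_part_in : #|[set D in S | y \in D]| ^ 2 <= 2 ^ #|trim V y|.
Proof.
have ltV : #|trim V y| < #|V| by have := card_trim pxy; lia.
apply: (part_bound (X := [set y]) ltV (trim_admissible pxy)).
- move=> D DS yD; rewrite sub1set yD; split => //; apply/subsetP => u /setD1P[uy uD].
  apply/trimP; split; rewrite ?(min_doms_sub DS uD) //.
  apply/negP => /leavesP[uV eyu uleaf]; have [w /setDP[wV _] Hw] := min_doms_priv DS uD.
  have wy : cnb w y.
    have /cnbP[->|ewu] : cnb w u by rewrite Hw.
      by apply: cnb_edge; rewrite e_sym.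
    by rewrite -(uleaf w wV) ?cnb_refl // e_sym.
  by move: (Hw y yD); rewrite wy eq_sym (negbTE uy).
- by apply/subsetP => u /setDP[/trimP[uV uy _] _]; apply: support_inN.
- move=> v u /setDP[/trimP[vV vy vL] vF'] /set1P->; apply: contra vF' => /cnbP[vy'|evy].
    by rewrite vy' eqxx in vy.
  by rewrite trim_freeE e_sym evy andbT; apply/trimP.
- move=> w /setDP[wV _]; rewrite in_setD negb_and negbK => wout; exists y; rewrite ?inE //.
  case: (eqVneq w y) => [->|wy]; first exact: cnb_refl.
  apply: cnb_edge; rewrite e_sym; case/orP: wout => [|wT]; first by rewrite trim_freeE => /andP[].
  have : w \in leaves V y by apply: contraNT wT => wL; apply/trimP.
  by case/leavesP.
Qed.

Lemma support_part_out : #|[set D in S | y \notin D]| ^ 2 <= 2 ^ #|trim V y|.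
Proof.
have ltV : #|trim V y| < #|V| by have := card_trim pxy; lia.
apply: (part_bound (X := leaves V y) ltV (admissible0 _)); rewrite ?setD0.
- move=> D DS yD; have LD : leaves V y \subset D.
    apply/subsetP => l /leavesP[lV eyl lleaf].
    have lN : l \in V :\: F by apply: support_inN; rewrite // eq_sym (edge_neq eyl).
    have [u uD /cnbP[->//|elu]] := min_doms_dom DS lN.
    by rewrite -(lleaf u (min_doms_sub DS uD) elu) uD in yD.
  split => //; apply/subsetP => u /setDP[uD uL]; apply/trimP; split => //.
    exact: min_doms_sub DS uD.
  by apply: contraNneq yD => <-.
- by apply/subsetP => u /trimP[uV uy _]; apply: support_inN.
- move=> v u /trimP[vV vy vL] uL; have /leavesP[_ _ uleaf] := uL.
  apply/negP => /cnbP[vu|evu]; first by rewrite vu uL in vL.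
  by rewrite (uleaf v vV) ?eqxx // e_sym in vy.
- move=> w /setDP[wV _] wT; case: (eqVneq w y) => [->|wy].
    by exists x; rewrite ?(pendant_in_leaves pxy) // cnb_edge // e_sym (pendant_edge pxy).
  by exists w; rewrite ?cnb_refl //; apply: contraNT wT => wL; apply/trimP.
Qed.

End Support.

Lemma support_case : (forall f, f \in F -> f = y) -> few_doms V F.
Proof.
move=> Fy; rewrite /few_doms (card_split2 S (fun D : {set T} => y \in D)).
exact: two_parts_bound (support_part_in Fy) (support_part_out Fy) (card_trim pxy).
Qed.

Lemma free_pendantE : x \in F -> V :\: F = V :\ x.
Proof.
by move=> xF; have [_ /card_le1P F1 _] := adm; apply/setP => u; rewrite in_setD in_setD1 (F1 x xF) inE.
Qed.

(* When x is free, its private neighbour can only be y. *)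
Lemma free_private D : x \in F -> D \in S -> x \in D ->
  forall u, u \in D -> cnb y u = (u == x).
Proof.
move=> xF DS xD; have [_ _ _ xleaf _ _ _ _] := pxy.
have [w wN Hw] := min_doms_priv DS xD; move: wN; rewrite free_pendantE // => /setD1P[wx wV].
suff -> : y = w by exact: Hw.
have /cnbP[wx'|ewx] : cnb w x by rewrite Hw.
  by rewrite wx' eqxx in wx.
by rewrite (xleaf w wV) // e_sym.
Qed.

Lemma free_private_y D : x \in F -> D \in S -> x \in D -> y \notin D.
Proof.
move=> xF DS xD; apply/negP => /(free_private xF DS xD).
by rewrite cnb_refl eq_sym (negbTE (edge_neq (pendant_edge pxy))).
Qed.

(* x is free and y has another leaf l: x is in no D, and may be deleted. *)
Lemma other_leaf_case l : x \in F -> l \in leaves V y -> l != x -> few_doms V F.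
Proof.
move=> xF /leavesP[lV eyl lleaf] lx; have NE := free_pendantE xF.
have xV := pendant_xV pxy.
have ltV : #|V :\ x| < #|V| by rewrite (cardsD1 x V) xV.
apply: (whole_bound (X := set0) ltV (admissible0 _)).
- move=> D DS; rewrite sub0set setD0; split => //; apply/subsetP => u uD.
  rewrite in_setD1 (min_doms_sub DS uD) andbT; apply: contraTneq uD => ->.
  apply/negP => xD; have yD := free_private_y xF DS xD.
  have lN : l \in V :\: F by rewrite NE in_setD1 lx.
  have [w wD /cnbP[Elw|elw]] := min_doms_dom DS lN; last first.
    by rewrite -(lleaf w (min_doms_sub DS wD) elw) wD in yD.
  by move: (free_private xF DS xD wD); rewrite -Elw cnb_edge // (negbTE lx).
- by rewrite setD0 NE.
- by move=> ? ? _; rewrite inE.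
- by move=> w; rewrite NE setD0 => ->.
Qed.

(* x is free and xy is a whole component: D contains exactly one of x, y. *)
Lemma lone_edge_case : x \in F -> (forall z, z \in V -> e y z -> z = x) -> few_doms V F.
Proof.
move=> xF yleaf; have NE := free_pendantE xF.
have [xV yV exy xleaf _ _ _ _] := pxy; have xy := edge_neq exy.
set W := V :\: [set x; y].
have szW : #|W| + 2 <= #|V| by apply: card_minus_pair.
have ltW : #|W| < #|V| by lia.
have W_N w : w \in W -> w \in V :\: F by case/setD2P => wV wx _; rewrite NE in_setD1 wx.
rewrite /few_doms (card_split2 S (fun D : {set T} => x \in D)).
apply: (two_parts_bound _ _ szW).
- apply: (part_bound (X := [set x]) ltW (admissible0 _)); rewrite ?setD0.
  + move=> D DS xD; rewrite sub1set xD; split => //; apply/subsetP => u /setD1P[ux uD].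
    have yD := free_private_y xF DS xD.
    by apply/setD2P; split; rewrite ?(min_doms_sub DS uD) //; apply: contraNneq yD => <-.
  + by apply/subsetP; apply: W_N.
  + move=> v u /setD2P[vV vx vy] /set1P->; apply/negP => /cnbP[vx'|evx].
      by rewrite vx' eqxx in vx.
    by rewrite (xleaf v vV) ?eqxx // e_sym in vy.
  + move=> w; rewrite NE => /setD1P[wx wV] wW; exists x; rewrite ?inE //.
    suff -> : w = y by apply: cnb_edge; rewrite e_sym.
    by apply/eqP; apply: contraNT wW => wy; apply/setD2P.
- apply: (part_bound (X := [set y]) ltW (admissible0 _)); rewrite ?setD0.
  + move=> D DS xD; have yD : y \in D.
      have yN : y \in V :\: F by rewrite NE in_setD1 eq_sym xy.
      have [u uD /cnbP[->//|eyu]] := min_doms_dom DS yN.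
      by rewrite -(yleaf u (min_doms_sub DS uD) eyu) uD in xD.
    rewrite sub1set yD; split => //; apply/subsetP => u /setD1P[uy uD].
    by apply/setD2P; split; rewrite ?(min_doms_sub DS uD) //; apply: contraNneq xD => <-.
  + by apply/subsetP; apply: W_N.
  + move=> v u /setD2P[vV vx vy] /set1P->; apply/negP => /cnbP[vy'|evy].
      by rewrite vy' eqxx in vy.
    by rewrite (yleaf v vV) ?eqxx // e_sym in vx.
  + move=> w; rewrite NE => /setD1P[wx wV] wW; exists y; rewrite ?inE //.
    suff -> : w = y by apply: cnb_refl.
    by apply/eqP; apply: contraNT wW => wy; apply/setD2P.
Qed.

(* The remaining case: x is free and, besides x, y has exactly one neighbour r,
   which is not a leaf.  Deleting x and y leaves H, in which r is early, so r
   belongs to a pendant pair of H; the minimal dominators of V are split by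
   their trace on {x, y} and each part is charged to an instance inside H. *)
Section PathCase.
Variable r : T.
Hypotheses (xF : x \in F) (rV : r \in V) (eyr : e y r) (nlr : nonleaf V y r).
Hypothesis y_nbs : forall z, z \in V -> e y z -> z = x \/ z = r.
Local Notation H := (V :\: [set x; y]).

Lemma r_neq_x : r != x.
Proof.
have [_ _ _ xleaf _ _ _ _] := pxy; case: nlr => w wV /andP[wy erw].
apply/negP => /eqP rx; rewrite rx in erw.
by rewrite (xleaf w wV erw) eqxx in wy.
Qed.

Lemma r_in_H : r \in H.
Proof. by apply/setD2P; split; rewrite ?r_neq_x // eq_sym (edge_neq eyr). Qed.

Lemma card_H : #|H| + 2 <= #|V|.
Proof. by have [xV yV exy _ _ _ _ _] := pxy; apply: card_minus_pair; rewrite ?edge_neq. Qed.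

Lemma H_N u : u \in H -> u \in V :\: F.
Proof. by case/setD2P => uV ux _; rewrite free_pendantE // in_setD1 ux. Qed.

Lemma out_H w : w \in V :\: F -> w \notin H -> w = y.
Proof.
rewrite free_pendantE // => /setD1P[wx wV] wH; apply/eqP.
by apply: contraNT wH => wy; apply/setD2P.
Qed.

Lemma H_nbs z w : z \in H -> w \in V -> e z w -> w \in H \/ (w = y /\ z = r).
Proof.
have [_ _ _ xleaf _ _ _ _] := pxy.
case/setD2P => zV zx zy wV ezw; case: (eqVneq w x) => [wx|wx].
  by rewrite (xleaf z zV) ?eqxx // in zy; rewrite -wx e_sym.
case: (eqVneq w y) => [wy|wy]; last by left; apply/setD2P.
right; split => //; case: (y_nbs zV) => [|Ez|//]; first by rewrite -wy e_sym.
by rewrite Ez eqxx in zx.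
Qed.

Lemma H_leaf_nbs c l w : l \in leaves H c -> l != r -> w \in V -> e l w -> w = c.
Proof.
move=> lL lr wV elw; have /leavesP[lH _ lleaf] := lL.
by case: (H_nbs lH wV elw) => [/lleaf->|[_ Elr]] //; rewrite Elr eqxx in lr.
Qed.

Lemma far_x v : v \in H -> ~~ cnb v x.
Proof.
have [_ _ _ xleaf _ _ _ _] := pxy.
case/setD2P => vV vx vy; apply/negP => /cnbP[vx'|evx]; first by rewrite vx' eqxx in vx.
by rewrite (xleaf v vV) ?eqxx // e_sym in vy.
Qed.

Lemma far_y v : v \in H -> v != r -> ~~ cnb v y.
Proof.
case/setD2P => vV vx vy vr; apply/negP => /cnbP[vy'|evy]; first by rewrite vy' eqxx in vy.
by case: (y_nbs vV) => [|Ev|Ev]; [rewrite e_sym | rewrite Ev eqxx in vx | rewrite Ev eqxx in vr].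
Qed.

Lemma r_early_H : has_nb H r /\ early H r.
Proof.
have [_ _ _ _ _ _ early_nl _] := pxy.
have rH := r_in_H; split.
  case: nlr => w wV /andP[wy erw]; apply: (has_nb_edge _ erw).
  by case: (H_nbs rH wV erw) => [//|[wy' _]]; rewrite wy' eqxx in wy.
apply: early_nl; rewrite ?rH //; first exact: subsetDl.
  by apply/setD2P => -[_]; rewrite eqxx.
by apply/setD2P => -[_ _]; rewrite eqxx.
Qed.

Lemma y_in_D D : D \in S -> y \in D -> x \notin D /\ r \notin D.
Proof.
move=> DS yD; have xD : x \notin D by apply: contraL yD; apply: free_private_y.
split => //; apply/negP => rD; have [w wN Hw] := min_doms_priv DS yD.
have wxr : w = y \/ w = r.
  have /cnbP[->|ewy] : cnb w y by rewrite Hw.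
    by left.
  move: wN; rewrite free_pendantE // => /setD1P[wx wV].
  by case: (y_nbs wV) => [|E|E]; [rewrite e_sym | rewrite E eqxx in wx | right].
have ry : r != y by rewrite eq_sym (edge_neq eyr).
by move: (Hw r rD); rewrite (negbTE ry); case: wxr => ->; rewrite ?cnb_refl ?cnb_edge.
Qed.

Lemma x_in_D D : D \in S -> x \in D -> r \notin D.
Proof.
move=> DS xD; apply/negP => /(free_private xF DS xD).
by rewrite cnb_edge // (negbTE r_neq_x).
Qed.

Lemma neither_in_D D : D \in S -> y \notin D -> x \notin D -> r \in D.
Proof.
move=> DS yD xD; have [_ _ exy _ _ _ _ _] := pxy.
have yN : y \in V :\: F by rewrite free_pendantE // in_setD1 eq_sym (edge_neq exy) (pendant_yV pxy).
have [u uD /cnbP[Eyu|eyu]] := min_doms_dom DS yN; first by rewrite Eyu uD in yD.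
by case: (y_nbs (min_doms_sub DS uD) eyu) => Eu; [rewrite -Eu uD in xD | rewrite -Eu].
Qed.

Lemma card_H_r : #|H :\ r| + 3 <= #|V|.
Proof. by have := card_H; rewrite (cardsD1 r H) r_in_H; lia. Qed.

Lemma trim_H_N (c : T) u : u \in trim H c -> u \in V :\: F.
Proof. by case/trimP => /H_N. Qed.

(* First subcase: r is a leaf of H hanging at z.  The three parts are charged
   to H \ r, to H trimmed at z, and to H \ r with z free. *)
Section RLeaf.
Variable z : T.
Hypothesis prz : pendant H r z.

(* y in D: then x, r are not, and D \ {y} dominates H \ r. *)
Lemma rleaf_part_y : #|[set D in S | y \in D]| ^ 2 <= 2 ^ #|H :\ r|.
Proof.
have ltV : #|H :\ r| < #|V| by have := card_H_r; lia.
apply: (part_bound (X := [set y]) ltV (admissible0 _)); rewrite ?setD0.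
- move=> D DS yD; have [xD rD] := y_in_D DS yD.
  rewrite sub1set yD; split => //; apply/subsetP => u /setD1P[uy uD].
  apply/setD1P; split; first by apply: contraNneq rD => <-.
  by apply/setD2P; split; rewrite ?(min_doms_sub DS uD) //; apply: contraNneq xD => <-.
- by apply/subsetP => u /setD1P[_ /H_N].
- by move=> v u /setD1P[vr vH] /set1P->; apply: far_y.
- move=> w wN wHr; exists y; rewrite ?inE //.
  case: (boolP (w \in H)) => wH; last by rewrite (out_H wN wH) cnb_refl.
  have -> : w = r by apply/eqP; apply: contraNT wHr => wr; apply/setD1P.
  by apply: cnb_edge; rewrite e_sym.
Qed.

(* x in D, y not: then z is in D (to dominate r) and no leaf at z is; D \ {x, z}
   dominates H trimmed at z, where the other neighbours of z are free. *)
Lemma rleaf_part_x :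
  #|[set D in S | (y \notin D) && (x \in D)]| ^ 2 <= 2 ^ #|trim H z|.
Proof.
have ltV : #|trim H z| < #|V| by have := card_trim prz; have := card_H; lia.
apply: (part_bound (X := [set x; z]) ltV (trim_admissible prz)).
- move=> D DS /andP[yD xD]; have rD := x_in_D DS xD.
  have zD : z \in D.
    have [u uD /cnbP[Eru|eru]] := min_doms_dom DS (H_N r_in_H); first by rewrite Eru uD in rD.
    case: (H_nbs r_in_H (min_doms_sub DS uD) eru) => [uH|[Euy _]]; last by rewrite -Euy uD in yD.
    by rewrite -(pendant_is_leaf prz uH eru).
  have LD l : l \in leaves H z -> l \notin D.
    move=> lL; apply/negP => lD; have lr : l != r by apply: contraNneq rD => <-.
    have /leavesP[lH ezl _] := lL; have [w /setDP[wV _] Hw] := min_doms_priv DS lD.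
    have wz : w = l \/ w = z.
      have /cnbP[->|elw] : cnb w l by rewrite Hw.
        by left.
      by right; apply: (H_leaf_nbs lL lr wV); rewrite e_sym.
    move: (Hw z zD); rewrite (negbTE (edge_neq ezl)).
    by case: wz => ->; rewrite ?cnb_refl // cnb_edge // e_sym.
  split; first by rewrite subUset !sub1set xD zD.
  apply/subsetP => u /setDP[uD]; rewrite in_set2 negb_or => /andP[ux uz].
  apply/trimP; split => //; last by apply: contraTN uD; apply: LD.
  by apply/setD2P; split; rewrite ?(min_doms_sub DS uD) //; apply: contraNneq yD => <-.
- by apply/subsetP => u /setDP[/trim_H_N].
- move=> v u /setDP[vT vF']; have /trimP[vH vz _] := vT.
  case/set2P => ->; first exact: far_x.
  apply: contra vF' => /cnbP[vz'|evz]; first by rewrite vz' eqxx in vz.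
  by rewrite trim_freeE vT e_sym.
- move=> w wN; rewrite in_setD negb_and negbK => wout.
  case: (boolP (w \in H)) => wH; last first.
    by exists x; rewrite ?inE ?eqxx // (out_H wN wH) cnb_edge // e_sym (pendant_edge pxy).
  exists z; rewrite ?inE ?eqxx ?orbT //.
  case: (eqVneq w z) => [->|wz]; first exact: cnb_refl.
  apply: cnb_edge; rewrite e_sym; case/orP: wout => [|wT]; first by rewrite trim_freeE => /andP[].
  have : w \in leaves H z by apply: contraNT wT => wL; apply/trimP.
  by case/leavesP.
Qed.

(* Neither x nor y in D: then r is, and D \ {r} dominates H \ r, where its
   neighbour z may be left undominated. *)
Lemma rleaf_part_none :
  #|[set D in S | (y \notin D) && (x \notin D)]| ^ 2 <= 2 ^ #|H :\ r|.
Proof.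
have [_ zH erz rleaf _ _ _ early_z] := prz.
have ltV : #|H :\ r| < #|V| by have := card_H_r; lia.
have zHr : z \in H :\ r by rewrite in_setD1 eq_sym (edge_neq erz) zH.
have adm' : admissible (H :\ r) [set z].
  by split; rewrite ?sub1set ?cards1 // => f /set1P->.
apply: (part_bound (X := [set r]) ltV adm').
- move=> D DS /andP[yD xD]; have rD := neither_in_D DS yD xD.
  rewrite sub1set rD; split => //; apply/subsetP => u /setD1P[ur uD].
  apply/setD1P; split => //; apply/setD2P; split; rewrite ?(min_doms_sub DS uD) //.
    by apply: contraNneq xD => <-.
  by apply: contraNneq yD => <-.
- by apply/subsetP => u /setDP[/setD1P[_ /H_N]].
- move=> v u /setDP[/setD1P[vr vH] vz] /set1P->.
  apply/negP => /cnbP[vr'|evr]; first by rewrite vr' eqxx in vr.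
  have /setD2P[vV _ vy] := vH; rewrite e_sym in evr.
  case: (H_nbs r_in_H vV evr) => [vH'|[vy' _]]; last by rewrite vy' eqxx in vy.
  by rewrite (rleaf v vH' evr) inE eqxx in vz.
- move=> w wN wout; exists r; rewrite ?inE //.
  case: (boolP (w \in H)) => wH; last by rewrite (out_H wN wH) cnb_edge.
  case: (eqVneq w r) => [->|wr]; first exact: cnb_refl.
  have -> : w = z by apply/eqP; apply: contraNT wout => wz; rewrite in_setD in_setD1 in_set1 wz wr wH.
  by apply: cnb_edge; rewrite e_sym.
Qed.

End RLeaf.

(* Second subcase: r is the support of a pendant pair zr of H.  All three parts
   are charged to H trimmed at r. *)
Section RSupport.
Variable z : T.
Hypothesis pzr : pendant H z r.
Local Notation L := (leaves H r).

Lemma card_trim_r : #|trim H r| + 4 <= #|V|.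
Proof. by have := card_trim pzr; have := card_H; lia. Qed.

Lemma leaf_r_nbs l w : l \in L -> w \in V -> e l w -> w = r.
Proof.
move=> lL; have /leavesP[_ erl _] := lL.
by apply: H_leaf_nbs lL _; rewrite eq_sym (edge_neq erl).
Qed.

Lemma out_trim_r w : w \in V :\: F -> w \notin trim H r -> [\/ w = y, w = r | w \in L].
Proof.
move=> wN wT; case: (boolP (w \in H)) => wH; first last.
  by constructor 1; apply: out_H.
case: (eqVneq w r) => [|wr]; first by constructor 2.
by constructor 3; apply: contraNT wT => wL; apply/trimP.
Qed.

Lemma in_trim_r u : u \in V -> u != x -> u != y -> u != r -> u \notin L -> u \in trim H r.
Proof. by move=> uV ux uy ur uL; apply/trimP; split => //; apply/setD2P. Qed.

(* The leaves at r are dominated only by themselves or by r. *)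
Lemma leaves_in_D D : D \in S -> r \notin D -> L \subset D.
Proof.
move=> DS rD; apply/subsetP => l lL; have /leavesP[lH _ _] := lL.
have [u uD /cnbP[->//|elu]] := min_doms_dom DS (H_N lH).
by rewrite -(leaf_r_nbs lL (min_doms_sub DS uD) elu) uD in rD.
Qed.

Lemma far_leaves v u : v \in trim H r -> u \in L -> ~~ cnb v u.
Proof.
case/trimP => /setD2P[vV _ _] vr vL uL; apply/negP => /cnbP[vu|evu].
  by rewrite vu uL in vL.
by rewrite (leaf_r_nbs uL vV) ?eqxx // e_sym in vr.
Qed.

(* y in D: then r is not, so all leaves at r are; remove them with y. *)
Lemma rsupport_part_y : #|[set D in S | y \in D]| ^ 2 <= 2 ^ #|trim H r|.
Proof.
have ltV : #|trim H r| < #|V| by have := card_trim_r; lia.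
apply: (part_bound (X := y |: L) ltV (admissible0 _)); rewrite ?setD0.
- move=> D DS yD; have [xD rD] := y_in_D DS yD.
  rewrite subUset sub1set yD leaves_in_D //; split => //.
  apply/subsetP => u /setDP[uD]; rewrite in_setU1 negb_or => /andP[uy uL].
  apply: in_trim_r; rewrite ?(min_doms_sub DS uD) //.
    by apply: contraNneq xD => <-.
  by apply: contraNneq rD => <-.
- by apply/subsetP => u /trim_H_N.
- move=> v u vT /setU1P[->|uL]; last exact: far_leaves.
  by case/trimP: vT => vH vr _; apply: far_y.
- move=> w wN /(out_trim_r wN)[->|->|wL].
  + by exists y; rewrite ?in_setU1 ?eqxx ?cnb_refl.
  + by exists y; rewrite ?in_setU1 ?eqxx // cnb_edge // e_sym.
  + by exists w; rewrite ?in_setU1 ?wL ?orbT ?cnb_refl.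
Qed.

(* x in D, y not: again r is not, so remove x with the leaves at r. *)
Lemma rsupport_part_x :
  #|[set D in S | (y \notin D) && (x \in D)]| ^ 2 <= 2 ^ #|trim H r|.
Proof.
have ltV : #|trim H r| < #|V| by have := card_trim_r; lia.
apply: (part_bound (X := x |: L) ltV (admissible0 _)); rewrite ?setD0.
- move=> D DS /andP[yD xD]; have rD := x_in_D DS xD.
  rewrite subUset sub1set xD leaves_in_D //; split => //.
  apply/subsetP => u /setDP[uD]; rewrite in_setU1 negb_or => /andP[ux uL].
  apply: in_trim_r; rewrite ?(min_doms_sub DS uD) //.
    by apply: contraNneq yD => <-.
  by apply: contraNneq rD => <-.
- by apply/subsetP => u /trim_H_N.
- move=> v u vT /setU1P[->|uL]; last exact: far_leaves.
  by case/trimP: vT => vH _ _; apply: far_x.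
- move=> w wN /(out_trim_r wN)[->|->|wL].
  + by exists x; rewrite ?in_setU1 ?eqxx // cnb_edge // e_sym (pendant_edge pxy).
  + exists z; rewrite ?in_setU1 ?(pendant_in_leaves pzr) ?orbT //.
    by apply: cnb_edge; rewrite e_sym (pendant_edge pzr).
  + by exists w; rewrite ?in_setU1 ?wL ?orbT ?cnb_refl.
Qed.

(* Neither x nor y in D: then r is, and no leaf at r is; remove r and let its
   other neighbours be free. *)
Lemma rsupport_part_none :
  #|[set D in S | (y \notin D) && (x \notin D)]| ^ 2 <= 2 ^ #|trim H r|.
Proof.
have ltV : #|trim H r| < #|V| by have := card_trim_r; lia.
apply: (part_bound (X := [set r]) ltV (trim_admissible pzr)).
- move=> D DS /andP[yD xD]; have rD := neither_in_D DS yD xD.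
  have LD l : l \in L -> l \notin D.
    move=> lL; apply/negP => lD; have /leavesP[_ erl _] := lL.
    have [w /setDP[wV _] Hw] := min_doms_priv DS lD.
    have wlr : w = l \/ w = r.
      have /cnbP[->|ewl] : cnb w l by rewrite Hw.
        by left.
      by right; apply: (leaf_r_nbs lL wV); rewrite e_sym.
    move: (Hw r rD); rewrite (negbTE (edge_neq erl)).
    by case: wlr => ->; rewrite ?cnb_refl // cnb_edge // e_sym.
  rewrite sub1set rD; split => //; apply/subsetP => u /setD1P[ur uD].
  apply: in_trim_r; rewrite ?(min_doms_sub DS uD) //; last by apply: contraTN uD; apply: LD.
    by apply: contraNneq xD => <-.
  by apply: contraNneq yD => <-.
- by apply/subsetP => u /setDP[/trim_H_N].
- move=> v u /setDP[vT vF'] /set1P->; have /trimP[_ vr _] := vT.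
  apply: contra vF' => /cnbP[vr'|evr]; first by rewrite vr' eqxx in vr.
  by rewrite trim_freeE vT e_sym.
- move=> w wN; rewrite in_setD negb_and negbK => wout; exists r; rewrite ?inE //.
  case: (boolP (w \in trim H r)) => wT.
    by move: wout; rewrite wT orbF trim_freeE => /andP[_ erw]; rewrite cnb_edge // e_sym.
  case: (out_trim_r wN wT) => [->|->|/leavesP[_ erw _]]; rewrite ?cnb_refl //.
    exact: cnb_edge.
  by rewrite cnb_edge // e_sym.
Qed.

End RSupport.

Lemma path_case : few_doms V F.
Proof.
have [r_nb r_early] := r_early_H.
have [x2 [y2 pH]] := pendant_exists e_sym e_irr bag_edge bag_interval bag_size r_in_H r_nb.
rewrite /few_doms (card_split3 S (fun D : {set T} => y \in D) (fun D : {set T} => x \in D)).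
case: (pendant_early_xy pH r_in_H r_nb r_early) => Er; rewrite -Er in pH.
  have := card_trim pH; have := card_H; have := card_H_r => szHr szH szT.
  by apply: three_parts_bound (rleaf_part_y) (rleaf_part_x pH) (rleaf_part_none pH) _ _ _; lia.
have sz := card_trim_r pH.
by apply: three_parts_bound (rsupport_part_y pH) (rsupport_part_x pH) (rsupport_part_none pH) _ _ _;
  lia.
Qed.

End PathCase.

End PendantCases.

Lemma step_case : few_doms V F.
Proof.
case: (set_0Vmem V) => [->|[v0 v0V]]; first exact: few_doms_empty.
case: (boolP [exists v in V, ~~ has_nb V v]) => [/existsP[v /andP[vV nv]]|].
  exact: isolated_case vV nv.
rewrite negb_exists_in => /forall_inP all_nb; have {}all_nb v : v \in V -> has_nb V v.
  by move/all_nb; rewrite negbK.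
have [x [y pxy]] := pendant_exists e_sym e_irr bag_edge bag_interval bag_size v0V (all_nb v0 v0V).
have [_ _ _ _ uniqnl early_xy _ _] := pxy; have [FV _ FI] := adm.
case: (boolP (x \in F)) => xF; last first.
  apply: support_case pxy _ => f fF; have fV := subsetP FV f fF.
  by case: (early_xy f fV (all_nb f fV) (FI f fF)) => // Efx; rewrite -Efx fF in xF.
case: (boolP [exists l in leaves V y, l != x]) => [/existsP[l /andP[lL lx]]|no_leaf].
  exact: (other_leaf_case pxy xF lL lx).
have leaf_x l : l \in leaves V y -> l = x.
  by move=> lL; apply/eqP; apply: contraNT no_leaf => lx; apply/existsP; exists l; rewrite lL.
case: (boolP [exists r in V, e y r && (r != x)]) => [/existsP[r /and3P[rV eyr rx]]|no_r].
  have rL : r \notin leaves V y by apply: contra rx => /leaf_x ->.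
  apply: (path_case pxy xF rV eyr (nonleafP rV eyr rL)) => z zV eyz.
  case: (boolP (z \in leaves V y)) => zL; first by left; apply: leaf_x.
  by right; apply: uniqnl => //; apply: nonleafP.
apply: lone_edge_case pxy xF _ => z zV eyz; apply/eqP; apply: contraNT no_r => zx.
by apply/existsP; exists z; rewrite zV eyz.
Qed.

End Step.

Theorem few_doms_admissible (V F : {set T}) : admissible V F -> few_doms V F.
Proof.
move: {2}#|V| (leqnn #|V|) => n; elim: n V F => [|n IHn] V F Vn; apply: step_case => V' F' lt'.
  by move: (leq_trans lt' Vn).
by apply: IHn; rewrite -ltnS (leq_trans lt' Vn).
Qed.

End Counting.

Theorem mds_pathwidth1_bound (T : finType) (e : rel T) :
  simple_graph e -> pathwidth_le e 1 -> #|mds e| ^ 2 <= 2 ^ #|T|.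
Proof.
move=> [e_sym e_irr] [s [[_ [edge_cov bag_interval]] width]].
have bag_edge u v : e u v -> exists i, (u \in nth set0 s i) && (v \in nth set0 s i).
  by move/edge_cov => [B Bs /andP[uB vB]]; exists (index B s); rewrite nth_index // uB vB.
have bag_size i : #|nth set0 s i| <= 2.
  case: (ltnP i (size s)) => si; first exact: width (mem_nth set0 si).
  by rewrite nth_default // cards0.
have := few_doms_admissible e_sym e_irr bag_edge bag_interval bag_size (admissible0 e s setT).
by rewrite /few_doms setD0 cardsT mds_min_doms.
Qed.

Lemma P2_simple : simple_graph P2.
Proof. by split => [i j|i]; rewrite /P2 ?eqxx // eq_sym. Qed.

Lemma P2_pathwidth : pathwidth_le P2 1.
Proof.
exists [:: setT]; split; last by move=> B; rewrite inE => /eqP->; rewrite cardsT card_ord.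
split; first by move=> v; exists setT; rewrite ?inE.
split; first by move=> u v _; exists setT; rewrite ?inE.
by move=> v [|i] [|j] [|k].
Qed.

Lemma P2_singleton_mds (i : 'I_2) : [set i] \in mds P2.
Proof.
rewrite mds_min_doms; apply/min_domsP; split; first exact: subsetT.
  by move=> v _; exists i; rewrite ?inE // /cnb /P2 orbN.
by move=> z /set1P->; exists i; rewrite ?inE // => u /set1P->; rewrite cnb_refl eqxx.
Qed.

Lemma P2_card_mds : #|mds P2| = 2.
Proof.
have := mds_pathwidth1_bound P2_simple P2_pathwidth; rewrite card_ord leq_exp2r // => ub.
have sub : [set [set ord0]; [set ord_max]] \subset mds P2.
  by apply/subsetP => D /set2P[] ->; apply: P2_singleton_mds.
have neq : [set ord0] != [set ord_max :> 'I_2] by apply/negP => /eqP/setP/(_ ord0); rewrite !inE.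
by apply/eqP; rewrite eqn_leq ub; move: (subset_leq_card sub); rewrite cards2 neq.
Qed.

Theorem mainTheorem7 :
  (forall (T : finType) (e : rel T), simple_graph e -> pathwidth_le e 1 ->
     #|mds e| ^ 2 <= 2 ^ #|T|) /\
  (simple_graph P2 /\ pathwidth_le P2 1 /\ #|mds P2| ^ 2 = 2 ^ #|'I_2|).
Proof.
split; first exact: mds_pathwidth1_bound.
by rewrite P2_card_mds card_ord; split; [exact: P2_simple | split; [exact: P2_pathwidth|]].
Qed.
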